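(* Let $\mathcal{M}=\langle W^{\mathcal{M}},\sim^{\mathcal{M}},L^{\mathcal{M}}\rangle$ be a partial epistemic model and $\mathbf{A}=\langle T,\sim^{\mathbf{A}},\mathsf{pre}\rangle$ an action model, both having proper partial epistemic frames. Then the partial product update $\mathcal{M}[\![\mathbf{A}]\!]$ is a partial epistemic model (in particular its relations $\sim_a$ are well defined, independent of the representative $X$ chosen in a world $(\langle X\rangle_t,t)$). In particular, if both $\mathcal{M}$ and $\mathbf{A}$ are proper, so is $\mathcal{M}[\![\mathbf{A}]\!]$.
   Context: Fix agents $\mathsf{Ag}=\{0,\dots,n-1\}$, $n>1$, and a set of atomic propositions $\mathsf{At}=\bigcup_{a\in\mathsf{Ag}}\mathsf{At}_a$ (disjoint union). Epistemic formulas are generated by $\varphi::=p\mid\neg\varphi\mid\varphi\wedge\varphi\mid\varphi\vee\varphi\mid K_a\varphi$ ($p\in\mathsf{At}$, $a\in\mathsf{Ag}$). A partial epistemic frame $\langle W,\sim\rangle$ consists of a nonempty finite set $W$ and, for each $a\in\mathsf{Ag}$, a partial equivalence relation $\sim_a$ on $W$ (symmetric and transitive, not necessarily reflexive). A partial epistemic model $\langle W,\sim,L\rangle$ adds a labeling $L:W\to\mathcal{P}(\mathsf{At})$. For a world $w$, $\mathrm{Alive}(w)=\{a\in\mathsf{Ag}\mid w\sim_a w\}$; for $A\subseteq\mathsf{Ag}$, $w\sim_A w'$ means $w\sim_a w'$ for all $a\in A$. A frame/model is proper if for all $w\neq w'$ there is $a$ with $w\not\sim_a w'$. Satisfaction: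 $\mathcal{M},w\models p$ iff $p\in L(w)$; Boolean connectives as usual; $\mathcal{M},w\models K_a\varphi$ iff $\mathcal{M},w'\models\varphi$ for all $w'$ with $w\sim_a w'$. An action model $\langle T,\sim^{\mathbf{A}},\mathsf{pre}\rangle$ is a partial epistemic frame $\langle T,\sim^{\mathbf{A}}\rangle$ (elements called actions) together with a map $\mathsf{pre}$ assigning an epistemic formula to each action; $\mathrm{Alive}(t)=\{a\mid t\sim^{\mathbf{A}}_a t\}$. Partial product update: for $t\in T$ and $X\in W^{\mathcal{M}}$ let $\langle X\rangle_t=\{Y\in W^{\mathcal{M}}\mid X\sim^{\mathcal{M}}_{\mathrm{Alive}(t)}Y \text{ and } \mathcal{M},Y\models\mathsf{pre}(t)\}$. Then $\mathcal{M}[\![\mathbf{A}]\!]=\langle W,\sim,L\rangle$ where $W=\{(\langle X\rangle_t,t)\mid X\in W^{\mathcal{M}},t\in T,\mathrm{Alive}(t)\subseteq\mathrm{Alive}(X),\mathcal{M},X\models\mathsf{pre}(t)\}$, $(\langle X\rangle_t,t)\sim_a(\langle Y\rangle_s,s)$ iff $X\sim^{\mathcal{M}}_aY$ and $t\sim^{\mathbf{A}}_a s$, and $L((\langle X\rangle_t,t))=\bigcap_{X'\in\langle X\rangle_t}L^{\mathcal{M}}(X')$. *)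

From mathcomp Require Import all_boot.
Set Implicit Arguments. Unset Strict Implicit. Unset Printing Implicit Defensive.

(* Agents are 'I_n.  Atoms: a type At together with an owner map
   own : At -> 'I_n, realising At = disjoint union of the At_a. *)

Inductive formula (n : nat) (At : Type) : Type :=
| Atom of At
| Neg of formula n At
| And of formula n At & formula n At
| Or  of formula n At & formula n At
| Kn  of 'I_n & formula n At.

Arguments Atom {n At} _.
Arguments Neg {n At} _.
Arguments And {n At} _ _.
Arguments Or {n At} _ _.
Arguments Kn {n At} _ _.

Section Defs.
Variables (n : nat) (At : Type).

Definition is_pframe (W : finType) (R : 'I_n -> rel W) : Prop :=
  [/\ (exists w : W, True),
      (forall a, symmetric (R a)) &
      (forall a, transitive (R a))].

Definition proper_frame (W : finType) (R : 'I_n -> rel W) : Prop :=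
  forall w w' : W, w <> w' -> exists a, ~~ R a w w'.

Fixpoint sat (W : finType) (R : 'I_n -> rel W) (L : W -> pred At)
    (f : formula n At) (w : W) : bool :=
  match f with
  | Atom p => L w p
  | Neg g => ~~ sat R L g w
  | And g h => sat R L g w && sat R L h w
  | Or g h => sat R L g w || sat R L h w
  | Kn a g => [forall w', R a w w' ==> sat R L g w']
  end.

Definition alive (W : finType) (R : 'I_n -> rel W) (w : W) : {set 'I_n} :=
  [set a | R a w w].

Definition relA (W : finType) (R : 'I_n -> rel W) (A : {set 'I_n}) (x y : W) : bool :=
  [forall a in A, R a x y].

Section Update.
Variables (W : finType) (R : 'I_n -> rel W) (L : W -> pred At)
          (T : finType) (RA : 'I_n -> rel T) (pre : T -> formula n At).

Definition cls (X : W) (t : T) : {set W} :=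
  [set Y | relA R (alive RA t) X Y && sat R L (pre t) Y].

(* X is a representative of the candidate world w = (<X>_t, t) *)
Definition upd_rep (w : {set W} * T) (X : W) : Prop :=
  [/\ alive RA w.2 \subset alive R X, sat R L (pre w.2) X & w.1 = cls X w.2].

Definition upd_world (w : {set W} * T) : Prop := exists X, upd_rep w X.

Definition upd_rel (a : 'I_n) (w w' : {set W} * T) : Prop :=
  exists X Y, [/\ upd_rep w X, upd_rep w' Y, R a X Y & RA a w.2 w'.2].

Definition upd_label (w : {set W} * T) : pred At :=
  fun p => [forall X', (X' \in w.1) ==> L X' p].

End Update.
End Defs.

(** Two representatives of the same updated world [(<X>_t, t)] are [~_a]-related
    for every agent [a] alive at [t], because each lies in the class of the other.
    An update edge [t ~_a s] makes [a] alive at both [t] and [s], so by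
    transitivity of [~_a] the relation between updated worlds can be read off any
    pair of representatives, and symmetry and transitivity are inherited from [M]
    and [A]. *)

From mathcomp Require Import all_boot.

Set Implicit Arguments.
Unset Strict Implicit.
Unset Printing Implicit Defensive.

Lemma per_refl_l (U : Type) (r : rel U) :
  symmetric r -> transitive r -> forall x y, r x y -> r x x.
Proof. by move=> symr trr x y rxy; apply: (trr y); rewrite // symr. Qed.

Lemma per_refl_r (U : Type) (r : rel U) :
  symmetric r -> transitive r -> forall x y, r x y -> r y y.
Proof. by move=> symr trr x y rxy; apply: (trr x); rewrite // symr. Qed.

Section PartialProductUpdate.
Variables (n : nat) (At : Type).
Variables (W : finType) (R : 'I_n -> rel W) (L : W -> pred At).
Variables (T : finType) (RA : 'I_n -> rel T) (pre : T -> formula n At).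
Hypotheses (symR : forall a, symmetric (R a)) (trR : forall a, transitive (R a)).
Hypotheses (symA : forall a, symmetric (RA a)) (trA : forall a, transitive (RA a)).

Local Notation rep := (upd_rep R L RA pre).
Local Notation rel_upd := (upd_rel R L RA pre).

Lemma mem_alive_l a t s : RA a t s -> a \in alive RA t.
Proof. by rewrite inE; apply: per_refl_l. Qed.

Lemma mem_alive_r a t s : RA a t s -> a \in alive RA s.
Proof. by rewrite inE; apply: per_refl_r. Qed.

Lemma upd_rep_mem w X : rep w X -> X \in w.1.
Proof.
case=> sub_alive preX ->; rewrite inE preX andbT.
by apply/forallP=> a; apply/implyP=> /(subsetP sub_alive); rewrite inE.
Qed.

Lemma upd_rep_relA w X X' : rep w X -> rep w X' -> relA R (alive RA w.2) X X'.
Proof. by case=> _ _ eqX /upd_rep_mem; rewrite eqX inE => /andP[]. Qed.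

Lemma upd_rep_rel a w X X' : rep w X -> rep w X' -> a \in alive RA w.2 -> R a X X'.
Proof. by move=> repX repX' /(forall_inP (upd_rep_relA repX repX')). Qed.

Lemma cls_relA X Y t :
  relA R (alive RA t) X Y -> cls R L RA pre X t = cls R L RA pre Y t.
Proof.
move=> /forall_inP XY; apply/setP=> Z; rewrite !inE; congr andb.
apply/forall_inP/forall_inP=> H a /[dup] ha /H; have := XY a ha.
- by rewrite symR; apply: trR.
- exact: trR.
Qed.

Lemma upd_rel_rep a w w' X Y :
  rep w X -> rep w' Y -> rel_upd a w w' -> R a X Y.
Proof.
move=> repX repY [X1 [Y1 [repX1 repY1 X1Y1 tt']]].
have XX1 := upd_rep_rel repX repX1 (mem_alive_l tt').
have Y1Y := upd_rep_rel repY1 repY (mem_alive_r tt').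
exact: trR (trR XX1 X1Y1) Y1Y.
Qed.

Lemma upd_rel_sym a w w' : rel_upd a w w' -> rel_upd a w' w.
Proof. by case=> X [Y [repX repY XY tt']]; exists Y, X; rewrite symR symA. Qed.

Lemma upd_rel_trans a w w' w'' :
  rel_upd a w w' -> rel_upd a w' w'' -> rel_upd a w w''.
Proof.
move=> [X [Y [repX repY XY tt']]] rel'; have [Y' [Z [repY' repZ _ t't'']]] := rel'.
exists X, Z; split=> //; last exact: trA t't''.
exact: trR XY (upd_rel_rep repY repZ rel').
Qed.

Lemma upd_rep_inj w w' X Y : rep w X -> rep w' Y ->
  w.2 = w'.2 -> relA R (alive RA w.2) X Y -> w = w'.
Proof.
case: w w' => [S t] [S' s] [_ _ /= ->] [_ _ /= ->] /= <-.
by move=> /cls_relA ->.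
Qed.

Lemma upd_proper w w' : proper_frame RA ->
  upd_world R L RA pre w -> upd_world R L RA pre w' -> w <> w' ->
  exists a, ~ rel_upd a w w'.
Proof.
move=> properA [X repX] [Y repY] neq_ww'.
have [eq_t | neq_t] := eqVneq w.2 w'.2.
- have /forall_inPn[a alive_a notXY] : ~~ relA R (alive RA w.2) X Y.
    by apply/negP=> /(upd_rep_inj repX repY eq_t).
  by exists a=> /(upd_rel_rep repX repY); apply/negP.
- have [a not_tt'] := properA _ _ (elimN eqP neq_t).
  by exists a=> -[? [? [_ _ _ tt']]]; rewrite tt' in not_tt'.
Qed.

End PartialProductUpdate.

Theorem proposition3p3 (n : nat) (hn : 1 < n) (At : Type) (own : At -> 'I_n)
    (W : finType) (R : 'I_n -> rel W) (L : W -> pred At)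
    (T : finType) (RA : 'I_n -> rel T) (pre : T -> formula n At) :
  is_pframe R -> is_pframe RA -> proper_frame R -> proper_frame RA ->
  (* well-definedness: independence of the chosen representatives *)
  (forall a w w' X X' Y Y',
      upd_rep R L RA pre w X -> upd_rep R L RA pre w X' ->
      upd_rep R L RA pre w' Y -> upd_rep R L RA pre w' Y' ->
      RA a w.2 w'.2 -> (R a X Y <-> R a X' Y')) /\
  (* each ~_a on M[[A]] is a partial equivalence relation *)
  (forall a w w', upd_world R L RA pre w -> upd_world R L RA pre w' ->
      upd_rel R L RA pre a w w' -> upd_rel R L RA pre a w' w) /\
  (forall a w w' w'', upd_world R L RA pre w -> upd_world R L RA pre w' ->
      upd_world R L RA pre w'' ->
      upd_rel R L RA pre a w w' -> upd_rel R L RA pre a w' w'' ->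
      upd_rel R L RA pre a w w'') /\
  (* M[[A]] is proper *)
  (forall w w', upd_world R L RA pre w -> upd_world R L RA pre w' -> w <> w' ->
      exists a, ~ upd_rel R L RA pre a w w').
Proof.
move=> [_ symR trR] [_ symA trA] _ properA.
split; [|split; [|split]].
- move=> a w w' X X' Y Y' repX repX' repY repY' tt'.
  split=> [XY | X'Y'].
  + by apply: (upd_rel_rep trR symA trA repX' repY'); exists X, Y.
  + by apply: (upd_rel_rep trR symA trA repX repY); exists X', Y'.
- by move=> a w w' _ _; apply: (upd_rel_sym symR symA).
- by move=> a w w' w'' _ _ _; apply: (upd_rel_trans trR symA trA).
- by move=> w w'; apply: (upd_proper symR trR symA trA).
Qed.
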